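(* Let $p_1,\dots,p_r,q_1,\dots,q_s$ be positive integers with $\sum_ip_i=\sum_jq_j$ and $\gcd(p_1,\dots,q_s)=1$, let $q$ be a prime power, $\lambda\in\mathbb{F}_q^\times$, and let $C$ be a non-empty cell with $|S(C)|\le r+s-1$. Then $$N_{C,\lambda}=\frac{(q-1)^{r+s-l(C)-2}}{q}+\frac{(-1)^{|S(C)|}(q-1)^{|S(C)|-l(C)-1}}{q}\sum_{m=0}^{q-2}\delta(a_Sm)\prod_{i=1}^rg(p_im)\prod_{j=1}^sg(-q_jm)\,\omega(\epsilon\lambda)^m,$$ where $\epsilon=(-1)^{q_1+\cdots+q_s}$ and $\delta(x)=1$ if $x\equiv0\pmod{q-1}$ and $0$ otherwise. (In particular the count does not depend on the choice of the coordinate set equal to $1$.)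
   Context: Fix a nontrivial additive character $\psi_q$ of $\mathbb{F}_q$, a generator $\omega$ of the character group of $\mathbb{F}_q^\times$, and $g(m)=\sum_{x\in\mathbb{F}_q^\times}\omega(x)^m\psi_q(x)$. A cell is a finite (possibly empty) sequence of distinct pairs $(i_1,j_1),\dots,(i_l,j_l)$ with $1\le i_k\le r$, $1\le j_k\le s$, $i_1\le\cdots\le i_l$, $j_1\le\cdots\le j_l$; $l(C)=l$, $S_x(C)=\{i_1,\dots,i_l\}$, $S_y(C)=\{j_1,\dots,j_l\}$, $|S(C)|=|S_x(C)|+|S_y(C)|$, and $a_S=\gcd(\{p_i:i\in S_x(C)\}\cup\{q_j:j\in S_y(C)\})$. $N'_{C,\lambda}$ is the number of tuples $(x_i)_{i\notin S_x(C)},(y_j)_{j\notin S_y(C)},z$ with all entries in $\mathbb{F}_q^\times$, where one chosen coordinate among these $x_i,y_j$ is fixed to be $1$, satisfying $\sum_{i\notin S_x}x_i=\sum_{j\notin S_y}y_j$ and $\lambda z^{a_S}\prod_{i\notin S_x}x_i^{p_i}=\prod_{j\notin S_y}y_j^{q_j}$; and $N_{C,\lambda}=(q-1)^{|S(C)|-l(C)-1}N'_{C,\lambda}$. *)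

From HB Require Import structures.
From mathcomp Require Import all_boot all_order all_algebra all_field.
Set Implicit Arguments. Unset Strict Implicit. Unset Printing Implicit Defensive.
Import Order.TTheory GRing.Theory Num.Theory.
Local Open Scope ring_scope.

Definition is_cell (r s : nat) (C : seq ('I_r * 'I_s)) : bool :=
  uniq C && sorted (fun a b : 'I_r * 'I_s => ((a.1 <= b.1)%N && (a.2 <= b.2)%N)) C.

Definition cellSx (r s : nat) (C : seq ('I_r * 'I_s)) : {set 'I_r} :=
  [set i | has (fun a : 'I_r * 'I_s => a.1 == i) C].
Definition cellSy (r s : nat) (C : seq ('I_r * 'I_s)) : {set 'I_s} :=
  [set j | has (fun a : 'I_r * 'I_s => a.2 == j) C].

Definition cellS (r s : nat) (C : seq ('I_r * 'I_s)) : nat :=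
  (#|cellSx C| + #|cellSy C|)%N.

Definition cell_a (r s : nat) (p : 'I_r -> nat) (q : 'I_s -> nat)
    (C : seq ('I_r * 'I_s)) : nat :=
  gcdn (\big[gcdn/0%N]_(i in cellSx C) p i) (\big[gcdn/0%N]_(j in cellSy C) q j).

Definition gauss (F : finFieldType) (psi omega : F -> algC) (m : int) : algC :=
  \sum_(x : F | x != 0) omega x ^ m * psi x.

(* N'_{C,lambda}: tuples (x_i)_{i notin S_x}, (y_j)_{j notin S_y}, z, all in F^x,
   with the chosen coordinate c fixed to 1.  The tuples indexed by the
   complements are encoded as full families x : 'I_r -> F, y : 'I_s -> F whose
   entries at indices in S_x (resp. S_y) are padded with the constant 1
   (a bijective encoding). *)
Definition Nprime (F : finFieldType) (r s : nat) (p : 'I_r -> nat) (q : 'I_s -> nat)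
    (C : seq ('I_r * 'I_s)) (lam : F) (c : 'I_r + 'I_s) : nat :=
  #|[set t : {ffun 'I_r -> F} * {ffun 'I_s -> F} * F |
      let: (x, y, z) := t in
      [&& [forall i, if i \in cellSx C then x i == 1 else x i != 0],
          [forall j, if j \in cellSy C then y j == 1 else y j != 0],
          z != 0,
          (match c with inl i => x i == 1 | inr j => y j == 1 end),
          \sum_(i | i \notin cellSx C) x i == \sum_(j | j \notin cellSy C) y j &
          lam * z ^+ cell_a p q C * \prod_(i | i \notin cellSx C) x i ^+ p i
            == \prod_(j | j \notin cellSy C) y j ^+ q j]]|.

Definition Ncell (F : finFieldType) (r s : nat) (p : 'I_r -> nat) (q : 'I_s -> nat)
    (C : seq ('I_r * 'I_s)) (lam : F) (c : 'I_r + 'I_s) : nat :=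
  ((#|F|.-1) ^ (cellS C - size C - 1) * Nprime p q C lam c)%N.

From HB Require Import structures.
From mathcomp Require Import all_boot all_order all_algebra all_field.
From mathcomp Require Import ring zify.
Import Order.TTheory GRing.Theory Num.Theory.
Set Implicit Arguments. Unset Strict Implicit. Unset Printing Implicit Defensive.
Local Open Scope ring_scope.

(* Let [N] count all solutions (x, y, z) of the two equations, no coordinate being fixed.
   Scaling the free [x_i], [y_j] by [u] and [z] by a [v] with [v ^ a_S = u ^ (sum_{j notin S_y} q_j
   - sum_{i notin S_x} p_i)] (it exists because [a_S] divides the cell exponents and
   [sum p = sum q]) permutes the solutions and multiplies the chosen coordinate by [u], so
   [N = (q - 1) N'].  Detecting the additive equation with [psi] and the multiplicative one
   with [omega] writes [N] as a double sum over [t] in [F] and [m < q - 1] which factorises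
   into Gauss sums.  The terms with [t = 0] vanish unless every exponent is a multiple of
   [q - 1], which by [gcd(p, q) = 1] forces [m = 0]; they give the main term.  For [t != 0]
   the powers of [omega t] cancel, leaving [omega(eps)^m], and every index in the cell
   contributes [g(0) = -1], whence the sign [(-1)^|S|]. *)

Lemma sum_ord_dvdn (R : nzSemiRingType) (N : nat) :
  (0 < N)%N -> \sum_(m < N) (N %| m)%:R = 1 :> R.
Proof.
case: N => // N _; rewrite big_ord_recl dvdn0 big1 ?addr0 // => i _.
by rewrite gtnNdvd // ltnS ltn_ord.
Qed.

Lemma biggcdn_mulr (I : finType) (P : pred I) (f : I -> nat) (m : nat) :
  (\big[gcdn/0]_(i | P i) (f i * m) = (\big[gcdn/0]_(i | P i) f i) * m)%N.
Proof. by rewrite (big_morph (muln^~ m) (fun x y => muln_gcdl x y m) (mul0n m)). Qed.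

Section Cells.

Variables r s : nat.

Implicit Types (a b : 'I_r * 'I_s) (C : seq ('I_r * 'I_s)).

Local Notation cell_le := (fun a b : 'I_r * 'I_s => ((a.1 <= b.1)%N && (a.2 <= b.2)%N)).

Lemma cellSx_cons a C : cellSx (a :: C) = a.1 |: cellSx C.
Proof. by apply/setP => i; rewrite !inE eq_sym. Qed.

Lemma cellSy_cons a C : cellSy (a :: C) = a.2 |: cellSy C.
Proof. by apply/setP => j; rewrite !inE eq_sym. Qed.

(* The head [a] of a cell is below all later entries, so if both of its coordinates occurred
   later then [a] would equal the next entry [b]. *)
Lemma cellS_cons_lt a b C :
  is_cell [:: a, b & C] -> (cellS (b :: C) < cellS [:: a, b & C])%N.
Proof.
case/andP=> /andP[aNbC _] /= /andP[le_ab path_b].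
have le_trans_cell : transitive cell_le.
  by move=> ? ? ? /andP[? ?] /andP[? ?]; apply/andP; split; apply: leq_trans; eauto.
have le_b d : d \in b :: C -> cell_le b d.
  rewrite inE => /predU1P[->|dC]; first by rewrite !leqnn.
  exact: (allP (order_path_min le_trans_cell path_b)).
have eq_b1 : a.1 \in cellSx (b :: C) -> a.1 = b.1.
  rewrite inE => /hasP[d /le_b/andP[bd _] /eqP da]; case/andP: le_ab => ab _.
  by apply/val_inj/eqP; rewrite eqn_leq ab -da bd.
have eq_b2 : a.2 \in cellSy (b :: C) -> a.2 = b.2.
  rewrite inE => /hasP[d /le_b/andP[_ bd] /eqP da]; case/andP: le_ab => _ ab.
  by apply/val_inj/eqP; rewrite eqn_leq ab -da bd.
have : (a.1 \notin cellSx (b :: C)) || (a.2 \notin cellSy (b :: C)).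
  rewrite -negb_and; apply: contra aNbC => /andP[/eq_b1 e1 /eq_b2 e2].
  by rewrite [a]surjective_pairing e1 e2 -surjective_pairing mem_head.
rewrite /cellS (cellSx_cons a (b :: C)) (cellSy_cons a (b :: C)) !cardsU1.
by case: (_ \notin _); case: (_ \notin _) => //= _; lia.
Qed.

Lemma cell_size_lt C : is_cell C -> C != [::] -> (size C < cellS C)%N.
Proof.
elim: C => [|a [|b C] IHC] // Ccell _.
  rewrite /cellS; have -> : cellSx [:: a] = [set a.1].
    by apply/setP => i; rewrite !inE /= orbF eq_sym.
  have -> : cellSy [:: a] = [set a.2] by apply/setP => j; rewrite !inE /= orbF eq_sym.
  by rewrite !cards1.
have bCcell : is_cell (b :: C) by case/andP: Ccell => /andP[_ uC] /path_sorted sC; apply/andP.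
exact: leq_ltn_trans (IHC bCcell isT) (cellS_cons_lt Ccell).
Qed.

End Cells.

Lemma card_notin (I : finType) (S : {set I}) : #|[pred i | i \notin S]| = (#|I| - #|S|)%N.
Proof.
have -> : #|[pred i | i \notin S]| = #|~: S| by apply: eq_card => i; rewrite !inE.
by rewrite cardsCs setCK.
Qed.

Lemma sum_exchange2 (R : nmodType) (I J K : finType) (P : pred I) (f : I -> J -> K -> R) :
  \sum_(i | P i) \sum_j \sum_k f i j k = \sum_j \sum_k \sum_(i | P i) f i j k.
Proof. by rewrite exchange_big; apply: eq_bigr => j _; apply: exchange_big. Qed.

Section PaddedFamilies.

Variable F : finFieldType.

Definition padded (I : finType) (S : {set I}) (x : {ffun I -> F}) : bool :=
  [forall i, if i \in S then x i == 1 else x i != 0].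

Definition scale_off (I : finType) (S : {set I}) (u : F) (x : {ffun I -> F}) :
  {ffun I -> F} := [ffun i => if i \in S then x i else u * x i].

Variables (I : finType) (S : {set I}).

Lemma padded_neq0 x i : padded S x -> i \notin S -> x i != 0.
Proof. by move=> /forallP/(_ i); case: (i \in S). Qed.

Lemma sum_padded_prod (R : comNzSemiRingType) (f : I -> F -> R) :
  \sum_(x | padded S x) \prod_(i | i \notin S) f i (x i)
  = \prod_(i | i \notin S) \sum_(w | w != 0) f i w.
Proof.
rewrite (big_distr_big_dep 1); apply: eq_bigl => x.
apply/forallP/pfamilyP => [h|[sup hin] i].
  split=> [|i]; last first.
    by rewrite !unfold_in /= => /negPf hi; have := h i; rewrite unfold_in hi.
  apply/subsetP => i; rewrite !inE unfold_in /=.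
  by have := h i; case: (i \in S) => // /eqP ->; rewrite eqxx.
case: (boolP (i \in S)) => hi; last by have := hin i; rewrite !unfold_in /= => /(_ hi).
apply: contraTT hi => hx; move/subsetP: sup => /(_ i).
by rewrite !inE unfold_in /= => /(_ hx).
Qed.

Variable u : F.
Hypothesis u0 : u != 0.

Lemma scale_off_inj : injective (scale_off S u).
Proof.
move=> x1 x2 /ffunP h; apply/ffunP => i; have := h i; rewrite !ffunE.
by case: ifP => // _ /(mulfI u0).
Qed.

Lemma padded_scale_off x : padded S (scale_off S u x) = padded S x.
Proof.
apply: eq_forallb => i; rewrite ffunE.
by case: (i \in S); rewrite // mulf_eq0 negb_or u0.
Qed.

Lemma sum_scale_off x :
  \sum_(i | i \notin S) scale_off S u x i = u * \sum_(i | i \notin S) x i.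
Proof. by rewrite mulr_sumr; apply: eq_bigr => i /negPf hi; rewrite ffunE hi. Qed.

Lemma prod_scale_off (e : I -> nat) x :
  \prod_(i | i \notin S) scale_off S u x i ^+ e i
  = u ^+ (\sum_(i | i \notin S) e i) * \prod_(i | i \notin S) x i ^+ e i.
Proof.
rewrite -prodrXr -big_split /=; apply: eq_bigr => i /negPf hi.
by rewrite ffunE hi exprMn.
Qed.

End PaddedFamilies.

Section FiniteFieldCharacters.

Variable F : finFieldType.
Variables psi omega : F -> algC.
Hypothesis psi0 : psi 0 = 1.
Hypothesis psiD : forall x y : F, psi (x + y) = psi x * psi y.
Hypothesis psi_nontriv : exists x : F, psi x != 1.
Hypothesis omega1 : omega 1 = 1.
Hypothesis omegaM : forall x y : F, x != 0 -> y != 0 -> omega (x * y) = omega x * omega y.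
Hypothesis omega_gen : forall m : nat,
  (forall x : F, x != 0 -> omega x ^+ m = 1) -> (#|F|.-1 %| m)%N.

Local Notation n := #|F|.-1.

Lemma card_finField_predK : n.+1 = #|F|.
Proof. by rewrite prednK // ltnW // finNzRing_gt1. Qed.

Lemma card_units_gt0 : (0 < n)%N.
Proof. by rewrite -ltnS card_finField_predK finNzRing_gt1. Qed.

Lemma card_units_neq0 : n%:R != 0 :> algC.
Proof. by rewrite pnatr_eq0 -lt0n card_units_gt0. Qed.

Lemma card_finField_neq0 : #|F|%:R != 0 :> algC.
Proof. by rewrite -card_finField_predK pnatr_eq0. Qed.

Lemma card_nonzero : #|[pred x : F | x != 0]| = n.
Proof. exact: cardC1. Qed.

Lemma expf_card_units (x : F) : x != 0 -> x ^+ n = 1.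
Proof.
by move=> x0; apply: (mulIf x0); rewrite mul1r -exprSr card_finField_predK expf_card.
Qed.

Lemma omega_neq0 x : x != 0 -> omega x != 0.
Proof.
move=> x0; apply/eqP => ox0; have := omegaM (invr_neq0 x0) x0.
by rewrite mulVf // omega1 ox0 mulr0 => /eqP; rewrite oner_eq0.
Qed.

Lemma omegaV x : x != 0 -> omega x^-1 = (omega x)^-1.
Proof.
move=> x0; apply: (mulIf (omega_neq0 x0)).
by rewrite -omegaM ?invr_eq0 // !mulVf ?omega_neq0.
Qed.

Lemma omegaX x k : x != 0 -> omega (x ^+ k) = omega x ^+ k.
Proof.
move=> x0; elim: k => [|k IHk]; first by rewrite !expr0.
by rewrite !exprS omegaM ?expf_neq0 // IHk.
Qed.

Lemma omega_prod (I : Type) (rI : seq I) (P : pred I) (f : I -> F) :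
  (forall i, P i -> f i != 0) ->
  omega (\prod_(i <- rI | P i) f i) = \prod_(i <- rI | P i) omega (f i).
Proof.
move=> f0; suff [] : \prod_(i <- rI | P i) f i != 0
    /\ omega (\prod_(i <- rI | P i) f i) = \prod_(i <- rI | P i) omega (f i) by [].
apply: (big_rec2 (fun y1 y2 => y1 != 0 /\ omega y1 = y2)); first by rewrite oner_neq0.
by move=> i y1 y2 Pi [y10 <-]; rewrite mulf_neq0 ?omegaM ?f0.
Qed.

Lemma omega_expn_dvd x k : x != 0 -> (n %| k)%N -> omega x ^+ k = 1.
Proof.
move=> x0 /dvdnP[d ->].
by rewrite mulnC exprM -omegaX // expf_card_units // omega1 expr1n.
Qed.

Lemma omega_exprz_dvd x e : x != 0 -> (n %| `|e|)%N -> omega x ^ e = 1.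
Proof. by move=> x0; case: e => k /(omega_expn_dvd x0) xk; rewrite /exprz xk ?invr1. Qed.

(* If [omega y ^+ k != 1], multiplying by it permutes the sum, which therefore vanishes. *)
Lemma sum_omegaX k : \sum_(x | x != 0) omega x ^+ k = (n %| k)%:R * n%:R.
Proof.
have [nk|nNk] := boolP (n %| k)%N.
  rewrite mul1r (eq_bigr (fun _ => 1)) => [|x x0]; last exact: omega_expn_dvd.
  by rewrite sumr_const card_nonzero.
have /forallPn[y] : ~~ [forall x, (x != 0) ==> (omega x ^+ k == 1)].
  apply: contra nNk => /forallP h; apply: omega_gen => x x0.
  exact/eqP/(implyP (h x) x0).
rewrite negb_imply mul0r => /andP[y0 oy1].
set S := \sum_(x | x != 0) _; have : S = omega y ^+ k * S.
  rewrite {1}/S (reindex_inj (mulfI y0)) mulr_sumr /=.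
  apply: eq_big => [x|x]; first by rewrite mulf_eq0 (negPf y0).
  by rewrite mulf_eq0 negb_or => /andP[_ x0]; rewrite omegaM // exprMn.
move/eqP; rewrite -subr_eq0 -{1}[S]mul1r -mulrBl mulf_eq0 subr_eq0 eq_sym.
by rewrite (negPf oy1) => /eqP.
Qed.

Lemma sum_omega_exprz e :
  \sum_(x | x != 0) omega x ^ e = (n %| `|e|)%:R * n%:R.
Proof.
case: e => k; first exact: sum_omegaX.
rewrite -sum_omegaX (reindex_inj invr_inj) /=.
apply: eq_big => [x|x]; first by rewrite invr_eq0.
by rewrite invr_eq0 => x0; rewrite omegaV // /exprz exprVn invrK.
Qed.

Lemma sum_expr_omega x :
  x != 0 -> \sum_(m < n) omega x ^+ m = (omega x == 1)%:R * n%:R.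
Proof.
move=> x0; have [->|ox1] := eqVneq (omega x) 1.
  by rewrite mul1r (eq_bigr (fun _ => 1)) ?sumr_const ?card_ord // => m _; rewrite expr1n.
have := subrX1 (omega x) n; rewrite omega_expn_dvd // subrr mul0r => /esym/eqP.
by rewrite mulf_eq0 subr_eq0 (negPf ox1) => /eqP.
Qed.

(* Summing [omega y ^+ m] over [y != 0] and [m < n] in both orders shows that the kernel
   of [omega] is trivial. *)
Lemma omega_eq1 x : x != 0 -> (omega x == 1) = (x == 1).
Proof.
move=> x0; apply/eqP/eqP => [ox1|->]; last exact: omega1.
pose K := [pred y : F | (y != 0) && (omega y == 1)].
have sum_by_y : \sum_(y | y != 0) \sum_(m < n) omega y ^+ m = #|K|%:R * n%:R.
  rewrite (eq_bigr (fun y => (omega y == 1)%:R * n%:R)) => [|y]; last exact: sum_expr_omega.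
  rewrite -mulr_suml (bigID (fun y => omega y == 1)) /=.
  rewrite [X in _ + X]big1 ?addr0 => [|y /andP[_ /negPf ->]] //.
  by rewrite (eq_bigr (fun _ => 1)) ?sumr_const // => y /andP[_ ->].
have sum_by_m : \sum_(y | y != 0) \sum_(m < n) omega y ^+ m = n%:R.
  rewrite exchange_big /=; under eq_bigr => m _ do rewrite sum_omegaX.
  by rewrite -mulr_suml sum_ord_dvdn ?mul1r // card_units_gt0.
have /card1P[y Ky] : #|K| == 1%N.
  rewrite -(eqr_nat algC) -(inj_eq (mulIf card_units_neq0)) mul1r.
  by rewrite -sum_by_y sum_by_m.
have := Ky 1; have := Ky x; rewrite !inE x0 ox1 oner_neq0 omega1 !eqxx /=.
by move=> /esym/eqP -> /esym/eqP ->.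
Qed.

Lemma eq_omega_sum x y : x != 0 -> y != 0 ->
  (x == y)%:R = n%:R^-1 * \sum_(m < n) omega (x / y) ^+ m.
Proof.
move=> x0 y0; have xy0 : x / y != 0 by rewrite mulf_neq0 ?invr_eq0.
rewrite sum_expr_omega // mulrCA mulVf ?card_units_neq0 // mulr1 omega_eq1 //.
by rewrite -[x / y == 1](inj_eq (mulIf y0)) divfK // mul1r.
Qed.

Lemma psi_sum (I : Type) (rI : seq I) (P : pred I) (f : I -> F) :
  psi (\sum_(i <- rI | P i) f i) = \prod_(i <- rI | P i) psi (f i).
Proof. exact: (big_morph psi psiD psi0). Qed.

Lemma sum_psi : \sum_t psi t = 0.
Proof.
case: psi_nontriv => x0 px0; set S := \sum_t _; have : S = psi x0 * S.
  rewrite {1}/S (reindex_inj (addIr x0)) mulr_sumr /=.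
  by apply: eq_bigr => t _; rewrite psiD mulrC.
move/eqP; rewrite -subr_eq0 -{1}[S]mul1r -mulrBl mulf_eq0 subr_eq0 eq_sym.
by rewrite (negPf px0) => /eqP.
Qed.

Lemma sum_psi_mul a : \sum_t psi (t * a) = (a == 0)%:R * #|F|%:R.
Proof.
have [->|a0] := eqVneq a 0.
  by rewrite mul1r (eq_bigr (fun _ => 1)) ?sumr_const // => t _; rewrite mulr0.
by rewrite mul0r -[RHS]sum_psi [RHS](reindex_inj (mulIf a0)).
Qed.

Lemma eq_psi_sum x y : (x == y)%:R = #|F|%:R^-1 * \sum_t psi (t * (x - y)).
Proof. by rewrite sum_psi_mul subr_eq0 mulrCA mulVf ?mulr1 ?card_finField_neq0. Qed.

Lemma sum_psi_neq0 : \sum_(x | x != 0) psi x = -1.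
Proof.
by have := sum_psi; rewrite (bigD1 0) //= psi0 addrC => /eqP; rewrite addr_eq0 => /eqP.
Qed.

Definition gauss_at (t : F) (e : int) : algC :=
  \sum_(w | w != 0) psi (t * w) * omega w ^ e.

Lemma gauss_at0 e : gauss_at 0 e = (n %| `|e|)%:R * n%:R.
Proof.
by rewrite -sum_omega_exprz; apply: eq_bigr => w _; rewrite mul0r psi0 mul1r.
Qed.

Lemma gauss_at_neq0 t e :
  t != 0 -> gauss_at t e = omega t ^ (- e) * gauss psi omega e.
Proof.
move=> t0; have ti0 : t^-1 != 0 by rewrite invr_eq0.
rewrite /gauss_at (reindex_inj (mulfI ti0)) /gauss mulr_sumr /=.
apply: eq_big => [w|w]; first by rewrite mulf_eq0 (negPf ti0).
rewrite mulf_eq0 negb_or => /andP[_ w0].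
by rewrite mulVKf // omegaM // expfzMl omegaV // exprz_inv; ring.
Qed.

Lemma gauss_dvd e : (n %| `|e|)%N -> gauss psi omega e = -1.
Proof.
move=> ne; rewrite -sum_psi_neq0; apply: eq_bigr => x x0.
by rewrite omega_exprz_dvd // mul1r.
Qed.

Section CellCount.

Variables (r s : nat) (p : 'I_r -> nat) (q : 'I_s -> nat).
Hypothesis sum_eq : (\sum_(i < r) p i)%N = (\sum_(j < s) q j)%N.
Hypothesis gcd1 : gcdn (\big[gcdn/0%N]_(i < r) p i) (\big[gcdn/0%N]_(j < s) q j) = 1%N.
Variable lam : F.
Hypothesis lam0 : lam != 0.
Variables (C : seq ('I_r * 'I_s)) (c : 'I_r + 'I_s).
Hypothesis c_ok :
  match c with inl i => i \notin cellSx C | inr j => j \notin cellSy C end.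

Local Notation Sx := (cellSx C).
Local Notation Sy := (cellSy C).
Local Notation a := (cell_a p q C).
Local Notation Xfree := (\sum_(i | i \notin Sx) p i)%N.
Local Notation Yfree := (\sum_(j | j \notin Sy) q j)%N.

Implicit Types (x : {ffun 'I_r -> F}) (y : {ffun 'I_s -> F}).

Definition xsum x := \sum_(i | i \notin Sx) x i.
Definition ysum y := \sum_(j | j \notin Sy) y j.
Definition xmon x := \prod_(i | i \notin Sx) x i ^+ p i.
Definition ymon y := \prod_(j | j \notin Sy) y j ^+ q j.
Definition coord x y : F := match c with inl i => x i | inr j => y j end.

Definition solution x y (z : F) : bool :=
  [&& padded Sx x, padded Sy y, z != 0,
      xsum x == ysum y & lam * z ^+ a * xmon x == ymon y].

Definition Nfixed (u : F) : algC :=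
  \sum_x \sum_y \sum_z (solution x y z && (coord x y == u))%:R.

Definition Nfree : algC := \sum_x \sum_y \sum_z (solution x y z)%:R.

Lemma Nprime_Nfixed1 : (Nprime p q C lam c)%:R = Nfixed 1.
Proof.
rewrite /Nprime -sumr_const /Nfixed pair_bigA pair_bigA big_mkcond /=.
apply: eq_bigr => -[[x y] z] _; rewrite inE /solution /coord.
by case: c => ? /=; case: (_ == 1); rewrite /= ?andbT ?andbF //; case: ifP.
Qed.

Lemma coord_neq0 x y z : solution x y z -> coord x y != 0.
Proof.
case/and3P=> px py _; rewrite /coord.
by case: c c_ok => k Sk; [apply: padded_neq0 px Sk | apply: padded_neq0 py Sk].
Qed.

Lemma Nfree_sum_Nfixed : Nfree = \sum_(u | u != 0) Nfixed u.
Proof.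
rewrite /Nfixed exchange_big; apply: eq_bigr => x _.
rewrite [RHS]exchange_big; apply: eq_bigr => y _.
rewrite [RHS]exchange_big; apply: eq_bigr => z _.
have [sol|_] := boolP (solution x y z); last by rewrite big1.
rewrite (bigD1 (coord x y) (coord_neq0 sol)) /= eqxx big1 ?addr0 // => u /andP[_].
by rewrite eq_sym => /negPf ->.
Qed.

Lemma a_dvd_p i : i \in Sx -> (a %| p i)%N.
Proof. by move=> Sxi; apply: dvdn_trans (dvdn_gcdl _ _) (biggcdn_inf i Sxi (dvdnn _)). Qed.

Lemma a_dvd_q j : j \in Sy -> (a %| q j)%N.
Proof. by move=> Syj; apply: dvdn_trans (dvdn_gcdr _ _) (biggcdn_inf j Syj (dvdnn _)). Qed.

Lemma a_dvd_sum_Sx : (a %| \sum_(i in Sx) p i)%N.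
Proof. by apply: dvdn_sum => i; apply: a_dvd_p. Qed.

Lemma a_dvd_sum_Sy : (a %| \sum_(j in Sy) q j)%N.
Proof. by apply: dvdn_sum => j; apply: a_dvd_q. Qed.

Lemma sum_p_split : (\sum_(i < r) p i = \sum_(i in Sx) p i + Xfree)%N.
Proof. by have := bigID (mem Sx) xpredT p. Qed.

Lemma sum_q_split : (\sum_(j < s) q j = \sum_(j in Sy) q j + Yfree)%N.
Proof. by have := bigID (mem Sy) xpredT q. Qed.

Lemma sum_eq_split :
  (\sum_(i in Sx) p i + Xfree = \sum_(j in Sy) q j + Yfree)%N.
Proof. by rewrite -sum_p_split -sum_q_split. Qed.

Lemma exists_scale_root u :
  u != 0 -> exists2 v : F, v != 0 & v ^+ a * u ^+ Xfree = u ^+ Yfree.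
Proof.
move=> u0.
exists (u ^+ ((\sum_(i in Sx) p i) %/ a)%N / u ^+ ((\sum_(j in Sy) q j) %/ a)%N).
  by rewrite mulf_neq0 ?invr_eq0 ?expf_neq0.
rewrite exprMn exprVn -!exprM !divnK ?a_dvd_sum_Sx ?a_dvd_sum_Sy //.
apply: (mulIf (expf_neq0 (\sum_(j in Sy) q j)%N u0)).
by rewrite mulrAC divfK ?expf_neq0 // -!exprD sum_eq_split addnC.
Qed.

(* Scaling the free [x_i], [y_j] by [u] and [z] by the [v] above maps the solutions with
   chosen coordinate 1 onto those with chosen coordinate [u]. *)
Lemma Nfixed_scale u : u != 0 -> Nfixed u = Nfixed 1.
Proof.
move=> u0; have [v v0 vE] := exists_scale_root u0.
rewrite /Nfixed (reindex_inj (scale_off_inj (S := Sx) u0)); apply: eq_bigr => x _.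
rewrite (reindex_inj (scale_off_inj (S := Sy) u0)); apply: eq_bigr => y _.
rewrite (reindex_inj (mulIf v0)); apply: eq_bigr => z _.
have -> : coord (scale_off Sx u x) (scale_off Sy u y) = u * coord x y.
  by rewrite /coord; case: c c_ok => ? /negPf Sc; rewrite ffunE Sc.
have monE : lam * (z * v) ^+ a * xmon (scale_off Sx u x)
            = lam * z ^+ a * xmon x * (v ^+ a * u ^+ Xfree).
  by rewrite /xmon prod_scale_off // exprMn; ring.
have -> : (u * coord x y == u) = (coord x y == 1).
  by rewrite -{2}[u]mulr1 (inj_eq (mulfI u0)).
rewrite /solution !padded_scale_off //.
rewrite mulf_eq0 (negPf v0) orbF /xsum /ysum !sum_scale_off // (inj_eq (mulfI u0)).
by rewrite monE vE /ymon prod_scale_off // mulrC (inj_eq (mulfI (expf_neq0 _ u0))).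
Qed.

Lemma Nfree_Nfixed1 : Nfree = n%:R * Nfixed 1.
Proof.
rewrite Nfree_sum_Nfixed (eq_bigr (fun _ => Nfixed 1)) => [|u]; last exact: Nfixed_scale.
by rewrite sumr_const card_nonzero mulr_natl.
Qed.

Definition char_summand (t : F) (m : nat) x y (z : F) : algC :=
  omega lam ^+ m * omega z ^+ (a * m)
  * (\prod_(i | i \notin Sx) (psi (t * x i) * omega (x i) ^ (p i * m)%N))
  * (\prod_(j | j \notin Sy) (psi (- t * y j) * omega (y j) ^ (- (q j * m)%N%:Z))).

Lemma omega_xmon x :
  padded Sx x -> omega (xmon x) = \prod_(i | i \notin Sx) omega (x i) ^+ p i.
Proof.
move=> px; have x0 i : i \notin Sx -> x i != 0 by exact: padded_neq0.
rewrite omega_prod => [|i /x0 xi0]; last exact: expf_neq0.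
by apply: eq_bigr => i /x0 xi0; rewrite omegaX.
Qed.

Lemma omega_ymon y :
  padded Sy y -> omega (ymon y) = \prod_(j | j \notin Sy) omega (y j) ^+ q j.
Proof.
move=> py; have y0 j : j \notin Sy -> y j != 0 by exact: padded_neq0.
rewrite omega_prod => [|j /y0 yj0]; last exact: expf_neq0.
by apply: eq_bigr => j /y0 yj0; rewrite omegaX.
Qed.

(* Orthogonality of [psi] detects the linear equation, that of the powers of [omega] the
   monomial one. *)
Lemma solution_char_sum x y z : padded Sx x -> padded Sy y -> z != 0 ->
  (solution x y z)%:R
  = #|F|%:R^-1 * n%:R^-1 * \sum_t \sum_(m < n) char_summand t m x y z.
Proof.
move=> px py z0; have xm0 : xmon x != 0.
  by apply/prodf_neq0 => i /(padded_neq0 px) xi0; rewrite expf_neq0.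
have ym0 : ymon y != 0.
  by apply/prodf_neq0 => j /(padded_neq0 py) yj0; rewrite expf_neq0.
have lhs0 : lam * z ^+ a * xmon x != 0 by rewrite !mulf_neq0 ?expf_neq0.
rewrite /solution px py z0 /= -mulnb natrM eq_psi_sum eq_omega_sum // mulrACA.
congr (_ * _); rewrite mulr_suml; apply: eq_bigr => t _.
rewrite mulr_sumr; apply: eq_bigr => m _.
have -> : t * (xsum x - ysum y)
    = \sum_(i | i \notin Sx) t * x i + \sum_(j | j \notin Sy) - t * y j.
  rewrite mulrBr /xsum /ysum !mulr_sumr -sumrN; congr (_ + _).
  by apply: eq_bigr => j _; rewrite mulNr.
have za0 : z ^+ a != 0 by rewrite expf_neq0.
rewrite psiD !psi_sum omegaM ?invr_eq0 // omegaV // !omegaM ?mulf_neq0 // omegaX //.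
rewrite omega_xmon // omega_ymon // -prodfV !exprMn -!prodrXl -exprM.
have -> : \prod_(i | i \notin Sx) omega (x i) ^+ p i ^+ m
          = \prod_(i | i \notin Sx) omega (x i) ^ (p i * m)%N.
  by apply: eq_bigr => i _; rewrite -exprM.
have -> : \prod_(j | j \notin Sy) omega (y j) ^- q j ^+ m
          = \prod_(j | j \notin Sy) omega (y j) ^ (- (q j * m)%N%:Z).
  by apply: eq_bigr => j _; rewrite -exprVn -exprM exprVn exprnN.
rewrite /char_summand !big_split /=; ring.
Qed.

Definition char_term (t : F) (m : nat) : algC :=
  omega lam ^+ m * (\sum_(z | z != 0) omega z ^+ (a * m))
  * (\prod_(i | i \notin Sx) gauss_at t (p i * m)%N)
  * (\prod_(j | j \notin Sy) gauss_at (- t) (- (q j * m)%N%:Z)).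

Lemma sum_char_summand t m :
  \sum_(x | padded Sx x) \sum_(y | padded Sy y) \sum_(z | z != 0) char_summand t m x y z
  = char_term t m.
Proof.
under eq_bigr => x _ do under eq_bigr => y _ do rewrite -!mulr_suml -mulr_sumr.
under eq_bigr => x _ do rewrite -mulr_sumr.
rewrite -mulr_suml -mulr_sumr.
rewrite (sum_padded_prod _ (fun i w => psi (t * w) * omega w ^ (p i * m)%N)).
by rewrite (sum_padded_prod _ (fun j w => psi (- t * w) * omega w ^ (- (q j * m)%N%:Z))).
Qed.

Lemma Nfree_char_sum :
  Nfree = #|F|%:R^-1 * n%:R^-1 * \sum_t \sum_(m < n) char_term t m.
Proof.
have -> : Nfree = \sum_(x | padded Sx x) \sum_(y | padded Sy y) \sum_(z | z != 0)
    #|F|%:R^-1 * n%:R^-1 * \sum_t \sum_(m < n) char_summand t m x y z.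
  rewrite /Nfree [RHS]big_mkcond; apply: eq_bigr => x _.
  have [px|pNx] /= := boolP (padded Sx x); last first.
    by rewrite big1 // => y _; rewrite big1 // => z _; rewrite /solution (negPf pNx).
  rewrite [RHS]big_mkcond; apply: eq_bigr => y _.
  have [py|pNy] /= := boolP (padded Sy y); last first.
    by rewrite big1 // => z _; rewrite /solution (negPf pNy) andbF.
  rewrite [RHS]big_mkcond; apply: eq_bigr => z _.
  have [z0|zN0] /= := boolP (z != 0); last by rewrite /solution (negPf zN0) !andbF.
  exact: solution_char_sum.
under eq_bigr => x _ do under eq_bigr => y _ do rewrite -mulr_sumr.
under eq_bigr => x _ do rewrite -mulr_sumr.
rewrite -mulr_sumr; congr (_ * _).
under eq_bigr => x _ do under eq_bigr => y _ do rewrite sum_exchange2.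
under eq_bigr => x _ do rewrite sum_exchange2.
rewrite sum_exchange2; apply: eq_bigr => t _; apply: eq_bigr => m _.
exact: sum_char_summand.
Qed.

(* This is where [gcd(p, q) = 1] enters. *)
Lemma dvdn_cell_mul d m : (d %| a * m)%N ->
  (forall i, i \notin Sx -> d %| p i * m)%N ->
  (forall j, j \notin Sy -> d %| q j * m)%N -> (d %| m)%N.
Proof.
move=> da dp dq.
have dpi i : (d %| p i * m)%N.
  have [Sxi|] := boolP (i \in Sx); last exact: dp.
  exact: dvdn_trans da (dvdn_mul (a_dvd_p Sxi) (dvdnn m)).
have dqj j : (d %| q j * m)%N.
  have [Syj|] := boolP (j \in Sy); last exact: dq.
  exact: dvdn_trans da (dvdn_mul (a_dvd_q Syj) (dvdnn m)).
have : (d %| gcdn (\big[gcdn/0]_(i < r) (p i * m)) (\big[gcdn/0]_(j < s) (q j * m)))%N.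
  by rewrite dvdn_gcd; apply/andP; split; apply/dvdn_biggcdP => k _.
by rewrite !biggcdn_mulr -muln_gcdl gcd1 mul1n.
Qed.

Lemma indicator_cell_dvdn d m :
  (d %| a * m)%:R * (\prod_(i | i \notin Sx) (d %| p i * m)%:R)
    * (\prod_(j | j \notin Sy) (d %| q j * m)%:R) = (d %| m)%:R :> algC.
Proof.
have [dm|dNm] := boolP (d %| m)%N.
  by rewrite dvdn_mull // !big1 ?mulr1 // => k _; rewrite dvdn_mull.
have [/forallP dp|/forallPn[i]] := boolP [forall i, (i \notin Sx) ==> (d %| p i * m)%N].
  have [/forallP dq|/forallPn[j]] := boolP [forall j, (j \notin Sy) ==> (d %| q j * m)%N].
    have [da|_] := boolP (d %| a * m)%N; last by rewrite !mul0r.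
    case/negP: dNm; apply: dvdn_cell_mul da _ _ => k; [exact/implyP/dp | exact/implyP/dq].
  rewrite negb_imply => /andP[Nyj /negPf ndq].
  by rewrite [X in _ * X](bigD1 j) //= ndq !(mul0r, mulr0).
rewrite negb_imply => /andP[Nxi /negPf ndp].
by rewrite (bigD1 i) //= ndp !(mul0r, mulr0).
Qed.

Lemma char_term0 m : char_term 0 m
  = (n %| m)%:R * n%:R ^+ (#|[pred i | i \notin Sx]| + #|[pred j | j \notin Sy]|).+1.
Proof.
rewrite /char_term oppr0 sum_omegaX.
rewrite (eq_bigr (fun i => (n %| p i * m)%:R * n%:R)) => [|i _]; last exact: gauss_at0.
rewrite [X in _ * X](eq_bigr (fun j => (n %| q j * m)%:R * n%:R)) => [|j _]; last first.
  by rewrite gauss_at0 abszN.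
rewrite !big_split /= !prodr_const.
set P := \prod_(i | _) _; set Q := \prod_(j | _) _.
transitivity (omega lam ^+ m * ((n %| a * m)%:R * P * Q)
              * n%:R ^+ (#|[pred i | i \notin Sx]| + #|[pred j | j \notin Sy]|).+1).
  by rewrite exprS exprD; ring.
rewrite indicator_cell_dvdn; have [nm|_] := boolP (n %| m)%N; last by rewrite !(mulr0, mul0r).
by rewrite omega_expn_dvd // mul1r.
Qed.

Definition eps : F := (-1) ^+ (\sum_(j < s) q j)%N.

Lemma eps_neq0 : eps != 0.
Proof. by rewrite expf_neq0 // oppr_eq0 oner_neq0. Qed.

(* When [n %| a m], the powers of [omega t] cancel because [sum p = sum q]; only the sign
   [eps] survives. *)
Lemma cell_phase t m : t != 0 -> (n %| a * m)%N ->
  (\prod_(i | i \notin Sx) omega t ^ (- (p i * m)%N%:Z))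
    * (\prod_(j | j \notin Sy) omega (- t) ^+ (q j * m)) = omega eps ^+ m.
Proof.
move=> t0 da; have m1 : (-1 : F) != 0 by rewrite oppr_eq0 oner_neq0.
have dX : (n %| (\sum_(i in Sx) p i) * m)%N.
  exact: dvdn_trans da (dvdn_mul a_dvd_sum_Sx (dvdnn m)).
have dY : (n %| (\sum_(j in Sy) q j) * m)%N.
  exact: dvdn_trans da (dvdn_mul a_dvd_sum_Sy (dvdnn m)).
have epsE : omega eps ^+ m = omega (-1) ^+ (Yfree * m).
  by rewrite /eps omegaX // -exprM sum_q_split mulnDl exprD omega_expn_dvd // mul1r.
have tE : omega t ^+ (Yfree * m) = omega t ^+ (Xfree * m).
  rewrite -[LHS]mul1r -(omega_expn_dvd t0 dY) -exprD -mulnDl -sum_eq_split.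
  by rewrite mulnDl exprD omega_expn_dvd // mul1r.
under eq_bigr => i _ do rewrite -exprnN.
rewrite prodfV !prodrXr -!big_distrl /= epsE -[- t]mulN1r omegaM // exprMn tE.
by rewrite mulrCA mulVf ?mulr1 // expf_neq0 // omega_neq0.
Qed.

Lemma char_term_neq0 t m : t != 0 ->
  char_term t m = n%:R * ((n %| a * m)%:R * omega (eps * lam) ^+ m
    * (\prod_(i | i \notin Sx) gauss psi omega (p i * m)%N)
    * (\prod_(j | j \notin Sy) gauss psi omega (- (q j * m)%N%:Z))).
Proof.
move=> t0; rewrite /char_term sum_omegaX.
rewrite (eq_bigr (fun i => omega t ^ (- (p i * m)%N%:Z) * gauss psi omega (p i * m)%N))
  => [|i _]; last exact: gauss_at_neq0.
rewrite [X in _ * X](eq_bigr (fun j =>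
    omega (- t) ^+ (q j * m) * gauss psi omega (- (q j * m)%N%:Z))) => [|j _]; last first.
  by rewrite gauss_at_neq0 ?oppr_eq0 // opprK.
have [da|_] := boolP (n %| a * m)%N; last by rewrite !(mul0r, mulr0).
by rewrite !big_split /= (omegaM eps_neq0 lam0) exprMn -(cell_phase t0 da); ring.
Qed.

Definition free_gauss_sum : algC :=
  \sum_(m < n) (n %| a * m)%:R * omega (eps * lam) ^+ m
    * (\prod_(i | i \notin Sx) gauss psi omega (p i * m)%N)
    * (\prod_(j | j \notin Sy) gauss psi omega (- (q j * m)%N%:Z)).

Lemma Nfree_value : Nfree = #|F|%:R^-1 * n%:R^-1
  * (n%:R ^+ (#|[pred i | i \notin Sx]| + #|[pred j | j \notin Sy]|).+1
     + n%:R ^+ 2 * free_gauss_sum).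
Proof.
rewrite Nfree_char_sum (bigD1 0) //=; congr (_ * (_ + _)).
  under eq_bigr => m _ do rewrite char_term0.
  by rewrite -mulr_suml sum_ord_dvdn ?mul1r // card_units_gt0.
rewrite (eq_bigr (fun _ => n%:R * free_gauss_sum)) => [|t t0]; last first.
  by rewrite /free_gauss_sum mulr_sumr; apply: eq_bigr => m _; apply: char_term_neq0.
rewrite sumr_const -[#|_|]/#|[pred x : F | x != 0]| card_nonzero.
by rewrite -(mulr_natl (n%:R * _)) mulrA -expr2.
Qed.

Lemma prod_gauss_Sx m : (n %| a * m)%N ->
  \prod_(i < r) gauss psi omega (p i * m)%N
  = (-1) ^+ #|Sx| * \prod_(i | i \notin Sx) gauss psi omega (p i * m)%N.
Proof.
move=> da; rewrite (bigID (mem Sx)) /= (eq_bigr (fun _ => -1)) ?prodr_const // => i Sxi.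
exact/gauss_dvd/(dvdn_trans da)/dvdn_mul/dvdnn/a_dvd_p.
Qed.

Lemma prod_gauss_Sy m : (n %| a * m)%N ->
  \prod_(j < s) gauss psi omega (- (q j * m)%N%:Z)
  = (-1) ^+ #|Sy| * \prod_(j | j \notin Sy) gauss psi omega (- (q j * m)%N%:Z).
Proof.
move=> da; rewrite (bigID (mem Sy)) /= (eq_bigr (fun _ => -1)) ?prodr_const // => j Syj.
by apply: gauss_dvd; rewrite abszN; exact/(dvdn_trans da)/dvdn_mul/dvdnn/a_dvd_q.
Qed.

Lemma Ncell_formula : is_cell C -> C != [::] -> (cellS C <= r + s - 1)%N ->
  (Ncell p q C lam c)%:R =
    (n ^ (r + s - size C - 2))%:R / #|F|%:R
    + (-1) ^+ cellS C * (n ^ (cellS C - size C - 1))%:R / #|F|%:R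
      * \sum_(m < n)
          ((n %| a * m)%N%:R
           * \prod_(i < r) gauss psi omega (p i * m)%N%:Z
           * \prod_(j < s) gauss psi omega (- (q j * m)%N%:Z)
           * omega (eps * lam) ^+ m).
Proof.
move=> Ccell Cne CS.
have -> : \sum_(m < n) ((n %| a * m)%N%:R
           * \prod_(i < r) gauss psi omega (p i * m)%N%:Z
           * \prod_(j < s) gauss psi omega (- (q j * m)%N%:Z)
           * omega (eps * lam) ^+ m) = (-1) ^+ cellS C * free_gauss_sum.
  rewrite /free_gauss_sum mulr_sumr; apply: eq_bigr => m _.
  have [da|_] := boolP (n %| a * m)%N; last by rewrite !(mul0r, mulr0).
  by rewrite prod_gauss_Sx // prod_gauss_Sy // /cellS exprD; ring.
rewrite /Ncell natrM.
have -> : (Nprime p q C lam c)%:R = Nfree / n%:R.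
  by rewrite Nprime_Nfixed1 Nfree_Nfixed1 mulrC mulKf ?card_units_neq0.
rewrite Nfree_value !card_notin !card_ord !natrX.
have sqr_sign : (-1) ^+ cellS C * (-1) ^+ cellS C = 1 :> algC.
  by rewrite -exprMn mulrNN mulr1 expr1n.
have Sxr : (#|Sx| <= r)%N by rewrite -[r in (_ <= r)%N]card_ord max_card.
have Sys : (#|Sy| <= s)%N by rewrite -[s in (_ <= s)%N]card_ord max_card.
have := cell_size_lt Ccell Cne; rewrite /cellS in CS sqr_sign * => lt_size.
have expE : (#|Sx| + #|Sy| - size C - 1 + (r - #|Sx| + (s - #|Sy|)).+1
             = r + s - size C - 2 + 2)%N by lia.
set N : algC := n%:R; set Q : algC := #|F|%:R; set sg : algC := (-1) ^+ _.
rewrite (_ : sg * N ^+ _ / Q * (sg * _)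
             = sg * sg * (N ^+ (#|Sx| + #|Sy| - size C - 1) / Q * free_gauss_sum)); last by ring.
rewrite sqr_sign mul1r -[N ^+ (r + s - size C - 2)](mulfK (expf_neq0 2 card_units_neq0)).
rewrite -exprD -expE exprD.
by field; rewrite card_units_neq0 card_finField_neq0.
Qed.

End CellCount.

End FiniteFieldCharacters.

Theorem mainTheorem13
  (F : finFieldType)
  (psi : F -> algC)
  (psi0 : psi 0 = 1)
  (psiD : forall x y : F, psi (x + y) = psi x * psi y)
  (psi_nontriv : exists x : F, psi x != 1)
  (omega : F -> algC)
  (omega1 : omega 1 = 1)
  (omegaM : forall x y : F, x != 0 -> y != 0 -> omega (x * y) = omega x * omega y)
  (omega_gen : forall m : nat,
      (forall x : F, x != 0 -> omega x ^+ m = 1) -> (#|F|.-1 %| m)%N)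
  (r s : nat) (p : 'I_r -> nat) (q : 'I_s -> nat)
  (p_pos : forall i, (0 < p i)%N) (q_pos : forall j, (0 < q j)%N)
  (sum_eq : (\sum_(i < r) p i)%N = (\sum_(j < s) q j)%N)
  (gcd1 : gcdn (\big[gcdn/0%N]_(i < r) p i) (\big[gcdn/0%N]_(j < s) q j) = 1%N)
  (lam : F) (lam0 : lam != 0)
  (C : seq ('I_r * 'I_s)) (Ccell : is_cell C) (Cne : C != [::])
  (CS : (cellS C <= r + s - 1)%N)
  (c : 'I_r + 'I_s)
  (c_ok : match c with inl i => i \notin cellSx C | inr j => j \notin cellSy C end) :
  let qF := #|F| in
  let eps : F := (-1) ^+ (\sum_(j < s) q j)%N in
  let aS := cell_a p q C in
  (Ncell p q C lam c)%:R =
    ((qF.-1) ^ (r + s - size C - 2))%:R / qF%:R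
    + (-1) ^+ cellS C * ((qF.-1) ^ (cellS C - size C - 1))%:R / qF%:R
      * \sum_(m < qF.-1)
          ((qF.-1 %| aS * m)%N%:R
           * \prod_(i < r) gauss psi omega (p i * m)%N%:Z
           * \prod_(j < s) gauss psi omega (- (q j * m)%N%:Z)
           * omega (eps * lam) ^+ m).
Proof.
exact: (Ncell_formula psi0 psiD psi_nontriv omega1 omegaM omega_gen sum_eq gcd1 lam0 c_ok
  Ccell Cne CS).
Qed.
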